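(* Fix $\phi\in(0,1)$. For $\gamma_1,\gamma_2>0$ let $z_1(\gamma_1,\gamma_2),z_2(\gamma_1,\gamma_2)$ be the two (possibly complex) roots of $z^2-(2-\gamma_1-\gamma_2+\gamma_1\gamma_2\phi)z+(1-\gamma_1)(1-\gamma_2)=0$ and $f(\gamma_1,\gamma_2):=\max\{|z_1(\gamma_1,\gamma_2)|,|z_2(\gamma_1,\gamma_2)|\}$. Then: (1) For each fixed $\gamma_1\in(0,1]$, $\gamma_2\mapsto f(\gamma_1,\gamma_2)$ is non-increasing on $(0,1]$; for each fixed $\gamma_2\in(0,1]$, $\gamma_1\mapsto f(\gamma_1,\gamma_2)$ is non-increasing on $(0,1]$. Hence $\min_{(\gamma_1,\gamma_2)\in(0,1]^2}f(\gamma_1,\gamma_2)=f(1,1)$. (2) For each fixed $\gamma_2\in[1,\infty)$, $\gamma_1\mapsto f(\gamma_1,\gamma_2)$ is non-increasing on $(0,1]$; for each fixed $\gamma_1\in[1,\infty)$, $\gamma_2\mapsto f(\gamma_1,\gamma_2)$ is non-increasing on $(0,1]$. Hence $\min_{(\gamma_1,\gamma_2)\in(0,1]\times[1,\infty)}f=\min_{\gamma_2\ge1}f(1,\gamma_2)$ and $\min_{(\gamma_1,\gamma_2)\in[1,\infty)\times(0,1]}f=\min_{\gamma_1\ge1}f(\gamma_1,1)$. *)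

From HB Require Import structures.
From mathcomp Require Import all_boot all_order all_algebra.
From mathcomp Require Import complex.
Set Implicit Arguments. Unset Strict Implicit. Unset Printing Implicit Defensive.
Import Order.TTheory GRing.Theory Num.Theory.
Local Open Scope ring_scope.

Section Defs.
Variable R : rcfType.

Definition qb (phi g1 g2 : R) : R := 2 - g1 - g2 + g1 * g2 * phi.
Definition qc (g1 g2 : R) : R := (1 - g1) * (1 - g2).

Definition z1 (phi g1 g2 : R) : R[i] :=
  (((qb phi g1 g2)%:C + sqrtc (((qb phi g1 g2) ^+ 2 - 4 * qc g1 g2)%:C)) / 2%:R)%C.
Definition z2 (phi g1 g2 : R) : R[i] :=
  (((qb phi g1 g2)%:C - sqrtc (((qb phi g1 g2) ^+ 2 - 4 * qc g1 g2)%:C)) / 2%:R)%C.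

Definition fmod (phi g1 g2 : R) : R :=
  Num.max (Normc.normc (z1 phi g1 g2)) (Normc.normc (z2 phi g1 g2)).

End Defs.

From HB Require Import structures.
From mathcomp Require Import all_boot all_order all_algebra.
From mathcomp Require Import complex.
From mathcomp Require Import ring lra.
Set Implicit Arguments. Unset Strict Implicit. Unset Printing Implicit Defensive.
Import Order.TTheory GRing.Theory Num.Theory.
Local Open Scope ring_scope.

(* Write rho(b, c) for the largest modulus of a root of z^2 - b z + c, b and c
   real.  The conditions [jury b c r] force rho(b, c) <= r, hold at
   r = rho(b, c), and for fixed r cut out a convex set of coefficients (b, c).
   For fixed g the coefficients of p_t = z^2 - qb(t, g) z + qc(t, g) are affine
   in t, and p_1 = z (z - w) with w = 1 - g + g phi.  Since
   p_t(w) = -(1 - t) g^2 phi (1 - phi) <= 0, we get |w| <= rho(p_t), so the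
   conditions at radius rho(p_t) hold at t and at 1, hence at every t' in
   [t, 1]. *)

Section QuadraticRootRadius.
Variable R : rcfType.
Implicit Types b c r w l : R.

Definition root_radius b c : R :=
  if 4 * c <= b ^+ 2 then (`|b| + Num.sqrt (b ^+ 2 - 4 * c)) / 2
  else Num.sqrt c.

(* Jury's stability conditions for a real quadratic, scaled to radius r. *)
Definition jury b c r : Prop :=
  [/\ 0 <= r, `|c| <= r ^+ 2, `|b| <= 2 * r & `|b| * r <= r ^+ 2 + c].

Lemma max_norm_half_add_sub b w :
  Num.max `|(b + w) / 2| `|(b - w) / 2| = (`|b| + `|w|) / 2.
Proof.
have [hb|hb] := lerP 0 b; have [hw|hw] := lerP 0 w;
have [h1|h1] := lerP 0 ((b + w) / 2); have [h2|h2] := lerP 0 ((b - w) / 2);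
rewrite ?(ger0_norm hb) ?(ltr0_norm hb) ?(ger0_norm hw) ?(ltr0_norm hw)
  ?(ger0_norm h1) ?(ltr0_norm h1) ?(ger0_norm h2) ?(ltr0_norm h2);
case: ltP => h3; lra.
Qed.

Lemma root_radius_jury b c : jury b c (root_radius b c).
Proof.
rewrite /root_radius.
have hB : `|b| ^+ 2 = b ^+ 2 by rewrite real_normK ?num_real.
have hB0 := normr_ge0 b.
case: ifP => [hD|/negbT]; last rewrite -ltNge => hD.
- have hD0 : 0 <= b ^+ 2 - 4 * c by lra.
  have := sqr_sqrtr hD0; have := sqrtr_ge0 (b ^+ 2 - 4 * c).
  set s := Num.sqrt _ => hs0 hs.
  split; [lra| |lra|nra].
  by rewrite ler_norml; apply/andP; split; nra.
- have hc0 : 0 <= c by nra.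
  have := sqr_sqrtr hc0; have := sqrtr_ge0 c.
  set s := Num.sqrt _ => hs0 hs.
  have : `|b| <= 2 * s by nra.
  by move=> hbs; split; [lra|rewrite (ger0_norm hc0); lra|lra|nra].
Qed.

Lemma root_radius_le b c r : jury b c r -> root_radius b c <= r.
Proof.
case=> hr hc hb hbr; rewrite /root_radius.
have hcc := ler_norm c.
have hB : `|b| ^+ 2 = b ^+ 2 by rewrite real_normK ?num_real.
have hB0 := normr_ge0 b.
case: ifP => [hD|/negbT]; last rewrite -ltNge => hD.
- have hD0 : 0 <= b ^+ 2 - 4 * c by lra.
  have := sqr_sqrtr hD0; have := sqrtr_ge0 (b ^+ 2 - 4 * c).
  set s := Num.sqrt _ => hs0 hs.
  have : s <= 2 * r - `|b| by nra.
  lra.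
- have hc0 : 0 <= c by nra.
  have := sqr_sqrtr hc0; have := sqrtr_ge0 c.
  set s := Num.sqrt _ => hs0 hs.
  nra.
Qed.

Lemma norm_le_root_radius b c w : w ^+ 2 - b * w + c <= 0 -> `|w| <= root_radius b c.
Proof.
move=> hp; rewrite /root_radius.
have hb1 := ler_norm b.
have hb2 : - b <= `|b| by rewrite -normrN ler_norm.
case: ifP => [hD|/negbT]; last first.
  by rewrite -ltNge => hD; have := sqr_ge0 (2 * w - b); nra.
have hD0 : 0 <= b ^+ 2 - 4 * c by lra.
have := sqr_sqrtr hD0; have := sqrtr_ge0 (b ^+ 2 - 4 * c).
set s := Num.sqrt _ => hs0 hs.
have h1 : 2 * w - b <= s by nra.
have h2 : b - 2 * w <= s by nra.
by rewrite ler_norml; apply/andP; split; lra.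
Qed.

Lemma norm_convex_le x1 x2 l : 0 <= l <= 1 ->
  `|l * x1 + (1 - l) * x2| <= l * `|x1| + (1 - l) * `|x2|.
Proof.
case/andP=> hl0 hl1; apply: le_trans (ler_normD _ _) _.
by rewrite !normrM (ger0_norm hl0) [`|1 - l|]ger0_norm ?subr_ge0.
Qed.

Lemma jury_convex b1 c1 b2 c2 r l : 0 <= l <= 1 ->
  jury b1 c1 r -> jury b2 c2 r ->
  jury (l * b1 + (1 - l) * b2) (l * c1 + (1 - l) * c2) r.
Proof.
move=> hl [hr hc1 hb1 hbr1] [_ hc2 hb2 hbr2].
have hc := norm_convex_le c1 c2 hl; have hb := norm_convex_le b1 b2 hl.
case/andP: hl => hl0 hl1.
split=> //; [nra|nra|].
apply: le_trans (ler_wpM2r hr hb) _; nra.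
Qed.

Lemma jury_root b r : `|b| <= r -> jury b 0 r.
Proof.
move=> hb; have hr : 0 <= r := le_trans (normr_ge0 b) hb.
by split; rewrite ?normr0; nra.
Qed.

End QuadraticRootRadius.

Section RootModulus.
Variable R : rcfType.
Implicit Types phi g t : R.

Lemma fmod_root_radius phi g1 g2 :
  fmod phi g1 g2 = root_radius (qb phi g1 g2) (qc g1 g2).
Proof.
rewrite /fmod /z1 /z2 /root_radius.
move: (qb phi g1 g2) (qc g1 g2) => b c.
have := sqr_sqrtc ((b ^+ 2 - 4 * c)%:C)%C.
case: (sqrtc _) => [x y]; rewrite expr2 /=; simpc => -[hx hy].
have -> : ((1 + 1) / ((1 + 1) ^+ 2 + 0 ^+ 2) : R) = 1 / 2.
  by rewrite expr0n /= addr0; field.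
rewrite /Normc.normc !mul1r sqrrN.
have /eqP : x * y = 0 by lra.
rewrite mulf_eq0 => /orP[] /eqP x0; subst.
- (* purely imaginary square root: both roots have modulus sqrt c *)
  rewrite ?addr0 ?subr0 ?add0r ?sub0r ?sqrrN maxxx.
  case: ifP => hD; last by have -> : (b / 2) ^+ 2 + (y / 2) ^+ 2 = c by lra.
  have /eqP : y * y = 0 by nra.
  rewrite mulf_eq0 orbb => /eqP y0; subst.
  have -> : b ^+ 2 - 4 * c = 0 by lra.
  rewrite sqrtr0 addr0 mul0r expr0n /= addr0 sqrtr_sqr normrM.
  by rewrite [`|2^-1|]ger0_norm // invr_ge0.
- rewrite !mul0r expr0n /= !addr0 !sqrtr_sqr max_norm_half_add_sub.
  have -> : 4 * c <= b ^+ 2 by nra.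
  by rewrite -hx mulr0 subr0 -expr2 sqrtr_sqr.
Qed.

Lemma fmodC phi g1 g2 : fmod phi g1 g2 = fmod phi g2 g1.
Proof. by rewrite !fmod_root_radius /qb /qc; congr root_radius; ring. Qed.

Lemma fmod_nonincreasing_l phi g t t' : 0 <= phi <= 1 -> t <= t' -> t' <= 1 ->
  fmod phi t' g <= fmod phi t g.
Proof.
case/andP=> hphi0 hphi1 htt' ht'1; rewrite !fmod_root_radius.
have [t1|t_neq1] := eqVneq t 1.
  by have -> : t' = t by rewrite t1; lra.
set r := root_radius (qb phi t g) (qc t g).
set w := 1 - g + g * phi.
have hw : `|w| <= r.
  apply: norm_le_root_radius; rewrite /qb /qc /w.
  have -> : (1 - g + g * phi) ^+ 2 - (2 - t - g + t * g * phi) * (1 - g + g * phi)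
      + (1 - t) * (1 - g) = - ((1 - t) * g ^+ 2 * (phi * (1 - phi))) by ring.
  rewrite oppr_le0; apply: mulr_ge0; last by rewrite mulr_ge0 ?subr_ge0.
  by rewrite mulr_ge0 ?sqr_ge0 ?subr_ge0 //; lra.
set l := (1 - t') / (1 - t).
have subt_neq0 : 1 - t != 0 by rewrite subr_eq0 eq_sym.
have hl : 0 <= l <= 1.
  have ht0 : 0 < 1 - t by lra.
  by rewrite /l ler_pdivrMr // ler_pdivlMr // mul0r mul1r; apply/andP; lra.
have := jury_convex hl (root_radius_jury (qb phi t g) (qc t g)) (jury_root hw).
have -> : l * qb phi t g + (1 - l) * w = qb phi t' g by rewrite /l /qb /w; field.
have -> : l * qc t g + (1 - l) * 0 = qc t' g by rewrite /l /qc; field.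
exact: root_radius_le.
Qed.

Lemma fmod_nonincreasing_r phi g t t' : 0 <= phi <= 1 -> t <= t' -> t' <= 1 ->
  fmod phi g t' <= fmod phi g t.
Proof. by rewrite !(fmodC phi g); apply: fmod_nonincreasing_l. Qed.

End RootModulus.

Theorem mainTheorem12 (R : rcfType) (phi : R) (hphi0 : 0 < phi) (hphi1 : phi < 1) :
  let f := fmod phi in
  (* (1) monotonicity on (0,1]^2 and the minimum at (1,1) *)
  ((forall g1 a b : R, 0 < g1 <= 1 -> 0 < a -> a <= b -> b <= 1 -> f g1 b <= f g1 a) /\
   (forall g2 a b : R, 0 < g2 <= 1 -> 0 < a -> a <= b -> b <= 1 -> f b g2 <= f a g2) /\
   (forall g1 g2 : R, 0 < g1 <= 1 -> 0 < g2 <= 1 -> f 1 1 <= f g1 g2)) /\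
  (* (2) *)
  ((forall g2 a b : R, 1 <= g2 -> 0 < a -> a <= b -> b <= 1 -> f b g2 <= f a g2) /\
   (forall g1 a b : R, 1 <= g1 -> 0 < a -> a <= b -> b <= 1 -> f g1 b <= f g1 a) /\
   (forall g1 g2 : R, 0 < g1 <= 1 -> 1 <= g2 -> f 1 g2 <= f g1 g2) /\
   (forall g1 g2 : R, 1 <= g1 -> 0 < g2 <= 1 -> f g1 1 <= f g1 g2)).
Proof.
move=> f.
have hphi : 0 <= phi <= 1 by apply/andP; lra.
have decr_l g t t' := @fmod_nonincreasing_l R phi g t t' hphi.
have decr_r g t t' := @fmod_nonincreasing_r R phi g t t' hphi.
split; [split; [|split]|split; [|split; [|split]]].
- by move=> g1 a b _ _; apply: decr_r.
- by move=> g2 a b _ _; apply: decr_l.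
- move=> g1 g2 /andP[_ g1le1] /andP[_ g2le1].
  exact: le_trans (decr_r 1 g2 1 g2le1 (lexx 1)) (decr_l g2 g1 1 g1le1 (lexx 1)).
- by move=> g2 a b _ _; apply: decr_l.
- by move=> g1 a b _ _; apply: decr_r.
- by move=> g1 g2 /andP[_ g1le1] _; exact: decr_l g2 g1 1 g1le1 (lexx 1).
- by move=> g1 g2 _ /andP[_ g2le1]; exact: decr_r g1 g2 1 g2le1 (lexx 1).
Qed.
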